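(* Let $n\ge2$ and let $\chi_{n-1}$ be the irreducible character of the symmetric group $S_n$ of dimension $n-1$ such that the character of the standard $n$-dimensional permutation representation of $S_n$ equals $1+\chi_{n-1}$. Then for every $g\in S_n$, $$c(g)\le\frac1n\Big(1+\frac{\chi_{n-1}(g)}{(n-1)^2}\Big),$$ and $$c(S_n)\le\frac{1}{n-1}.$$
   Context: For a finite group $G$ and $g\in G$, $c(g)=|\{(x,y)\in G\times G:[x,y]=g\}|/|G|^2$, and $c(G)=c(1)$. *)

From mathcomp Require Import all_boot all_order all_algebra all_fingroup all_solvable all_field all_character.
Set Implicit Arguments. Unset Strict Implicit. Unset Printing Implicit Defensive.
Import GRing.Theory Num.Theory.
Local Open Scope ring_scope.

(* c_G(g) = |{(x,y) in G x G : [x,y] = g}| / |G|^2, valued in algC.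
   Commutator convention [~ x, y] = x^-1 * y^-1 * x * y (MathComp's). *)
Definition comm_prob (gT : finGroupType) (G : {group gT}) (g : gT) : algC :=
  (#|[set xy : gT * gT | [&& xy.1 \in G, xy.2 \in G & ([~ xy.1, xy.2]%g == g)]]|%:R)
  / ((#|G| ^ 2)%N)%:R.

Definition comm_prob_grp (gT : finGroupType) (G : {group gT}) : algC :=
  comm_prob G 1%g.

Definition perm_char (n : nat) (g : 'S_n) : algC := #|[set i : 'I_n | g i == i]|%:R.

From mathcomp Require Import all_boot all_order all_algebra all_fingroup all_solvable all_field all_character.
From mathcomp Require Import zify ring.
Set Implicit Arguments. Unset Strict Implicit. Unset Printing Implicit Defensive.
Import Order.TTheory GRing.Theory Num.Theory.

(* If [~ x, y] = g then x * y = y * (x * g), so the permutations x * y and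
   y * (x * g) agree at all n points: n times the number of solutions of
   [~ x, y] = g is at most the total number T of coincidences of x * y and
   y * (x * g) over all pairs (x, y).  T is computed exactly by counting
   permutations with prescribed values at one or two points.  Writing
   chi = fix - 1, summing over y gives n (n-2)! (n - 1 + chi(x) chi(x g)), the
   2-transitive form of  sum_y chi(a b^y) = |G| chi(a) chi(b) / chi(1);  the
   orthogonality relation  sum_x chi(x) chi(x g) = n (n-2)! chi(g)  then gives
   T = (n!)^2 (1 + chi(g) / (n-1)^2). *)

Lemma card_set_sum (I : finType) (P : pred I) : #|[set i | P i]| = \sum_i (P i : nat).
Proof. by rewrite -sum1dep_card big_mkcond. Qed.

Lemma sum_card_exchange (I J : finType) (P : I -> J -> bool) :
  \sum_i #|[set j | P i j]| = \sum_j #|[set i | P i j]|.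
Proof.
under eq_bigr do rewrite card_set_sum.
by rewrite exchange_big; apply: eq_bigr => j _; rewrite card_set_sum.
Qed.

Lemma card_fibers (I J : finType) (f : I -> J) (P : pred I) :
  #|[set i | P i]| = \sum_j #|[set i | P i && (f i == j)]|.
Proof.
rewrite -sum1dep_card (partition_big f xpredT) //.
by apply: eq_bigr => j _; rewrite sum1dep_card.
Qed.

Lemma sum_nat_if (T : finType) (P : pred T) (m1 m2 : nat) :
  \sum_t (if P t then m1 else m2) =
  #|[set t | P t]| * m1 + (#|T| - #|[set t | P t]|) * m2.
Proof.
rewrite (bigID P) /= (eq_bigr (fun _ => m1)) => [|t ->//].
rewrite [X in _ + X](eq_bigr (fun _ => m2)) => [|t /negbTE -> //].
rewrite !sum_nat_const cardsE; congr (_ + _ * _).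
by rewrite -(cardC P) addKn.
Qed.

Section PermCounting.
Variable n : nat.
Implicit Types (s t x y a b g : 'S_n) (i j k : 'I_n).

Lemma card_perm_fixing (A : {set 'I_n}) :
  #|[set s : 'S_n | [forall i in A, s i == i]]| = (n - #|A|)`!.
Proof.
have -> : n - #|A| = #|~: A|.
  by rewrite -[X in X - _](card_ord n) -(cardsC A) addKn.
rewrite -card_perm; apply: eq_card => s; rewrite inE.
apply/forall_inP/subsetP => [fixA i | onCA i iA].
  by rewrite !inE; exact/contra/fixA.
by apply/negPn/negP => /onCA; rewrite inE iA.
Qed.

Lemma card_perm_agree (A : {set 'I_n}) t :
  #|[set s : 'S_n | [forall i in A, s i == t i]]| = (n - #|A|)`!.
Proof.
rewrite -card_perm_fixing -[RHS](card_rcoset _ t); apply: eq_card => s.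
rewrite mem_rcoset !inE; apply: eq_forallb_in => i _.
by rewrite permM (can2_eq (permKV t) (permK t)).
Qed.

Lemma card_perm_map1 i i' : #|[set s : 'S_n | s i == i']| = n.-1`!.
Proof.
rewrite -subn1 -(cards1 i) -(card_perm_agree _ (tperm i i')); apply: eq_card => s.
rewrite !inE; apply/idP/forall_inP => [/eqP si l /set1P -> | /(_ i (set11 i))].
  by rewrite tpermL si.
by rewrite tpermL.
Qed.

Lemma card_perm_map2 i j i' j' : i != j -> i' != j' ->
  #|[set s : 'S_n | (s i == i') && (s j == j')]| = n.-2`!.
Proof.
move=> neq_ij neq_ij'.
pose t := (tperm i i' * tperm (tperm i i' j) j')%g.
have ti : t i = i'.
  rewrite permM tpermL tpermD //; last by rewrite eq_sym.
  by rewrite (canF_eq (tpermK i i')) tpermR eq_sym.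
have tj : t j = j' by rewrite permM tpermL.
have card_ij : #|[set i; j]| = 2 by rewrite cards2 neq_ij.
rewrite -(subn2 n) -card_ij -(card_perm_agree _ t); apply: eq_card => s.
rewrite !inE -ti -tj.
apply/andP/forall_inP => [[/eqP si /eqP sj] l /set2P [] -> | fix_ij].
- by rewrite si.
- by rewrite sj.
by rewrite !fix_ij ?set21 ?set22.
Qed.

Lemma card_perm_map_pair i j i' j' :
  #|[set s : 'S_n | (s i == i') && (s j == j')]| =
  if j == i then (if j' == i' then n.-1`! else 0) else (if j' == i' then 0 else n.-2`!).
Proof.
case: eqP => [-> | /eqP neq_ji]; case: eqP => [-> | /eqP neq_ji'].
- by rewrite -(card_perm_map1 i i'); apply: eq_card => s; rewrite !inE andbb.
- apply/eqP; rewrite cards_eq0; apply/eqP/setP => s; rewrite !inE.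
  by apply/negP => /andP[/eqP-> /eqP eq_ij']; rewrite eq_ij' eqxx in neq_ji'.
- apply/eqP; rewrite cards_eq0; apply/eqP/setP => s; rewrite !inE.
  apply/negP => /andP[/eqP si /eqP sj].
  by move: neq_ji; rewrite -(inj_eq (@perm_inj _ s)) si sj eqxx.
by rewrite card_perm_map2 // eq_sym.
Qed.

Definition fixn s := #|[set i | s i == i]|.

Definition coincidences s t := #|[set k | s k == t k]|.

Lemma fixn_le s : fixn s <= n.
Proof. by rewrite -[n in _ <= n]card_ord max_card. Qed.

Lemma sum_fixn : \sum_x fixn x = n * n.-1`!.
Proof.
rewrite (sum_card_exchange (fun x i => x i == i)).
by under eq_bigr do rewrite card_perm_map1; rewrite sum_nat_const card_ord.
Qed.

Lemma sum_fixn_mulr g : \sum_x fixn (x * g) = n * n.-1`!.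
Proof. by rewrite -sum_fixn [RHS](reindex_inj (mulIg g)). Qed.

Lemma sum_coincidences_conj a b :
  \sum_y coincidences (a * y) (y * b) =
  fixn a * fixn b * n.-1`! + (n - fixn a) * (n - fixn b) * n.-2`!.
Proof.
rewrite /coincidences (sum_card_exchange (fun y k => (a * y)%g k == (y * b)%g k)).
have card_k k : #|[set y | (a * y)%g k == (y * b)%g k]| =
    if a k == k then fixn b * n.-1`! else (n - fixn b) * n.-2`!.
  rewrite (card_fibers (fun y : 'S_n => y k)).
  rewrite (eq_bigr (fun j => #|[set y : 'S_n | (y k == j) && (y (a k) == b j)]|)); last first.
    by move=> j _; apply: eq_card => y; rewrite !inE !permM andbC; case: eqP => // ->.
  under eq_bigr do rewrite card_perm_map_pair.
  by case: (a k == k); rewrite sum_nat_if card_ord ?muln0 ?addn0.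
under eq_bigr do rewrite card_k.
by rewrite sum_nat_if card_ord !mulnA.
Qed.

Lemma sum_fixn_map j c :
  \sum_(x : 'S_n | x j == c) fixn x =
  if c == j then n.-1`! + n.-1 * n.-2`! else n.-2 * n.-2`!.
Proof.
rewrite /fixn; under eq_bigr do rewrite card_set_sum.
rewrite exchange_big /=.
have card_i i : \sum_(x : 'S_n | x j == c) (x i == i : nat) = #|[set x : 'S_n | (x i == i) && (x j == c)]|.
  by rewrite card_set_sum big_mkcond; apply: eq_bigr => x _; case: (x j == c); rewrite ?andbT ?andbF.
under eq_bigr do rewrite card_i card_perm_map_pair.
rewrite (bigD1 j) //= eqxx.
rewrite (eq_bigr (fun i => if c == i then 0 else n.-2`!)) => [|i]; last first.
  by rewrite eq_sym => /negbTE ->.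
case: eqP => [-> | /eqP neq_cj].
  rewrite (eq_bigr (fun _ => n.-2`!)) => [|i]; last by rewrite eq_sym => /negbTE ->.
  by rewrite sum_nat_const cardC1 card_ord.
rewrite (bigD1 c) //= eqxx add0n.
rewrite (eq_bigr (fun _ => n.-2`!)) => [|i /andP[_]]; last by rewrite eq_sym => /negbTE ->.
rewrite sum_nat_const; congr (_ * _).
have -> : #|[pred i | (i != j) && (i != c)]| = #|~: [set j; c]|.
  by apply: eq_card => i; rewrite !inE negb_or.
by have := cardsC [set j; c]; rewrite cards2 eq_sym neq_cj card_ord; lia.
Qed.

Lemma sum_fixn_mul g :
  \sum_x fixn x * fixn (x * g) =
  fixn g * (n.-1`! + n.-1 * n.-2`!) + (n - fixn g) * (n.-2 * n.-2`!).
Proof.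
have fixn_mul x :
    fixn x * fixn (x * g) = \sum_j (if x j == (g^-1)%g j then fixn x else 0).
  rewrite mulnC {1}/fixn card_set_sum big_distrl; apply: eq_bigr => j _ /=.
  by rewrite permM (can2_eq (permK g) (permKV g)); case: ifP; rewrite ?mul1n.
rewrite (eq_bigr _ (fun x _ => fixn_mul x)) exchange_big /=.
under eq_bigr do rewrite -big_mkcond sum_fixn_map.
rewrite sum_nat_if card_ord.
rewrite (_ : [set t | _] = [set t | g t == t]) //; apply/setP => t.
by rewrite !inE (can2_eq (permKV g) (permK g)) eq_sym.
Qed.

Lemma card_commutator_le g :
  n * #|[set xy : 'S_n * 'S_n | [~ xy.1, xy.2]%g == g]| <=
  \sum_x \sum_y coincidences (x * y) (y * (x * g)).
Proof.
rewrite card_set_sum -(pair_big xpredT xpredT (fun x y => ([~ x, y]%g == g) : nat)) /=.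
rewrite big_distrr; apply: leq_sum => x _; rewrite big_distrr; apply: leq_sum => y _.
case: eqP => [comm_xy | _] /=; last by rewrite muln0.
rewrite muln1 -[n in n <= _]card_ord subset_leq_card //; apply/subsetP => k _.
by rewrite inE mulgA -comm_xy -commgC.
Qed.

End PermCounting.

Section PermCharacter.
Variable n : nat.
Hypothesis n_gt1 : 1 < n.
Implicit Types (x y a b g : 'S_n).

Let fact_pred : n.-1`! = n.-1 * n.-2`!.
Proof. by case: n n_gt1 => [|[|m]]. Qed.

Local Open Scope ring_scope.

Let natr_pred : n.-1%:R = n%:R - 1 :> algC.
Proof. by rewrite -subn1 natrB // ltnW. Qed.

Let natr_pred2 : n.-2%:R = n%:R - 2 :> algC.
Proof. by rewrite -subn2 natrB. Qed.

Let natr_pred_neq0 : n.-1%:R != 0 :> algC.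
Proof. by rewrite pnatr_eq0 -lt0n ltn_predRL. Qed.

Let natr_fact : n`!%:R = n%:R * n.-1%:R * n.-2`!%:R :> algC.
Proof. by rewrite -!natrM -mulnA -fact_pred; case: n n_gt1. Qed.

Lemma sum_coincidences_conj_char a b :
  (\sum_y coincidences (a * y) (y * b))%:R =
  (n * n.-2`!)%:R * (n.-1%:R + (perm_char a - 1) * (perm_char b - 1)) :> algC.
Proof.
rewrite sum_coincidences_conj fact_pred /perm_char -/(fixn a) -/(fixn b).
by rewrite !natrD !natrM !natrB ?fixn_le // natr_pred; ring.
Qed.

Lemma sum_perm_char_mul g :
  \sum_x (perm_char x - 1) * (perm_char (x * g) - 1) =
  (n * n.-2`!)%:R * (perm_char g - 1) :> algC.
Proof.
have expand x : (perm_char x - 1) * (perm_char (x * g) - 1) =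
    (fixn x * fixn (x * g))%:R - (fixn x)%:R - (fixn (x * g))%:R + 1 :> algC.
  by rewrite natrM /perm_char; ring.
rewrite (eq_bigr _ (fun x _ => expand x)) big_split !sumrB /= -!natr_sum.
rewrite sum_fixn_mul sum_fixn sum_fixn_mulr sumr_const card_Sn fact_pred.
rewrite /perm_char -/(fixn g) natr_fact !natrD !natrM !natrB ?fixn_le //.
by rewrite !natrD !natrM natr_pred natr_pred2; ring.
Qed.

Lemma sum_coincidences_commutator g :
  (\sum_x \sum_y coincidences (x * y) (y * (x * g)))%:R =
  n`!%:R ^+ 2 * (1 + (perm_char g - 1) / n.-1%:R ^+ 2) :> algC.
Proof.
rewrite natr_sum (eq_bigr _ (fun x _ => sum_coincidences_conj_char x (x * g))).
rewrite -mulr_sumr big_split sumr_const card_Sn sum_perm_char_mul /=.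
by rewrite -[_ *+ n`!]mulr_natr natrM natr_fact; field.
Qed.

Lemma comm_prob_Sn_le g :
  comm_prob [set: 'S_n]%G g <= n%:R^-1 * (1 + (perm_char g - 1) / n.-1%:R ^+ 2).
Proof.
rewrite /comm_prob.
have -> : [set xy | [&& xy.1 \in [set: 'S_n]%G, xy.2 \in [set: 'S_n]%G & [~ xy.1, xy.2]%g == g]] =
    [set xy : 'S_n * 'S_n | [~ xy.1, xy.2]%g == g] by apply/setP => xy; rewrite !inE.
rewrite cardsT card_Sn natrX ler_pdivrMr ?exprn_gt0 ?ltr0n ?fact_gt0 //.
rewrite -mulrA [X in _ <= _ * X]mulrC -sum_coincidences_commutator.
rewrite ler_pdivlMl ?ltr0n ?(ltnW n_gt1) // -natrM ler_nat.
exact: card_commutator_le.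
Qed.

Lemma comm_prob_grp_Sn_le : comm_prob_grp [set: 'S_n]%G <= n.-1%:R^-1.
Proof.
apply: le_trans (comm_prob_Sn_le 1) _.
have -> : perm_char (1 : 'S_n) = n%:R.
  rewrite /perm_char (_ : [set i | _] = setT) ?cardsT ?card_ord //.
  by apply/setP => i; rewrite !inE perm1 eqxx.
have n_neq0 : n%:R != 0 :> algC by rewrite pnatr_eq0 -lt0n ltnW.
have := natr_pred_neq0; rewrite natr_pred => n1_neq0.
rewrite [X in X <= _](_ : _ = (n%:R - 1)^-1) //; field.
by rewrite n_neq0 n1_neq0.
Qed.
End PermCharacter.

Local Open Scope ring_scope.

Theorem corollary4 (n : nat) (chi : 'CF([set: 'S_n]))
  (hn : (2 <= n)%N)
  (hirr : chi \in irr [set: 'S_n])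
  (hdim : chi 1%g = (n.-1)%:R)
  (hperm : forall g : 'S_n, perm_char g = 1 + chi g) :
  (forall g : 'S_n,
     comm_prob [set: 'S_n]%G g
       <= n%:R^-1 * (1 + chi g / ((n.-1)%:R ^+ 2)))
  /\ comm_prob_grp [set: 'S_n]%G <= (n.-1)%:R^-1.
Proof.
(* hperm alone determines chi. *)
have chiE g : chi g = perm_char g - 1 by rewrite hperm addrC addKr.
split=> [g | ]; last exact: comm_prob_grp_Sn_le.
by rewrite chiE; exact: comm_prob_Sn_le.
Qed.
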